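(* Let $\varepsilon>0$, $\beta,\delta\in(0,1)$, and let $G$ be a graph with at least one edge. Run: set $T=-\frac8\varepsilon\ln\frac4\beta$, $\tilde T=T+\mathrm{Lap}(4/\varepsilon)$; for $\tau=1,2,4,8,\dots$ compute $\tilde Q_\tau=Q_{\mathrm{LP\text{-}Del\text{-}N}}(G,\tau)+\mathrm{Lap}(4/\varepsilon)$ and stop at the first $\tau$ with $\tilde Q_\tau>\tilde T$; output $$\tau^*=3\tau+3|Q_{\mathrm{LP\text{-}Del\text{-}N}}(G,\tau)|+\mathrm{Lap}(6/\varepsilon)+\frac6\varepsilon\ln\max\Big(\frac1\delta,\frac2\beta\Big)+1.$$ Then with probability at least $1-\beta$, $$\tau^*\le6\deg(G)+\frac{24}\varepsilon\ln\log(4\deg(G))+\frac{48}\varepsilon\ln\frac4\beta+\frac{12}\varepsilon\ln\max\Big(\frac1\delta,\frac2\beta\Big)+1$$ and $$N_{\tau^*}(G)\le\frac{24}\varepsilon\ln\log(4\deg(G))+\frac{48}\varepsilon\ln\frac4\beta.$$ Furthermore, with probability at least $1-\delta$, $\tau^*+N_{\tau^*}(G)\le2\tau^*$.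
   Context: Graphs are finite, simple, undirected; $\deg(G)$ is the maximum degree; $E(v)$ is the set of edges at $v$; $N_t(G)$ is the number of nodes of degree at least $t$. $Q_{\mathrm{LP\text{-}Del\text{-}N}}(G,\tau)$ is the optimal value of the LP: maximize $-\sum_{v}x_v$ subject to $y_e\ge1-x_{v'}-x_{v''}$ for every edge $e=(v',v'')$, $\sum_{e\in E(v)}y_e\le\tau$ for every node $v$, and $x_v,y_e\in[0,1]$. $\mathrm{Lap}(b)$ has density $\frac1{2b}e^{-|x|/b}$; all draws are independent. $\ln$ is the natural logarithm and $\log$ the base-2 logarithm. *)

From HB Require Import structures.
From mathcomp Require Import all_boot all_order all_algebra.
From mathcomp Require Import all_classical all_reals all_analysis.
Set Implicit Arguments. Unset Strict Implicit. Unset Printing Implicit Defensive.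
Import Order.TTheory GRing.Theory Num.Theory.
Import numFieldNormedType.Exports.
Local Open Scope classical_set_scope.
Local Open Scope ring_scope.

Definition simple_graph (V : finType) (adj : rel V) : Prop :=
  symmetric adj /\ irreflexive adj.

Definition degv (V : finType) (adj : rel V) (v : V) : nat := #|[set u | adj v u]|.
Definition maxdeg (V : finType) (adj : rel V) : nat := (\max_(v : V) degv adj v)%N.

Definition Nt {R : realType} (V : finType) (adj : rel V) (t : R) : nat :=
  #|[set v : V | t <= (degv adj v)%:R]|.

(* x : node variables; y : edge variables, indexed by ordered pairs (u,v) with
   adj u v, required symmetric so that it is a function of the unordered edge. *)
Definition lp_feasible {R : realType} (V : finType) (adj : rel V) (tau : R)
  (x : V -> R) (y : V -> V -> R) : Prop :=
  (forall u v, adj u v -> y u v = y v u) /\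
  (forall u v, adj u v -> 1 - x u - x v <= y u v) /\
  (forall v, \sum_(u | adj v u) y v u <= tau) /\
  (forall v, 0 <= x v <= 1) /\
  (forall u v, adj u v -> 0 <= y u v <= 1).

Definition Q_LP {R : realType} (V : finType) (adj : rel V) (tau : R) : R :=
  sup [set r : R | exists x y, lp_feasible adj tau x y /\ r = - \sum_(v : V) x v].

Definition laplace_law {R : realType} d (T : measurableType d)
  (P : probability T R) (X : T -> R) (b : R) : Prop :=
  forall A : set R, measurable A ->
    P (X @^-1` A) =
    (\int[@lebesgue_measure R]_(x in A) ((2 * b)^-1 * expR (- `|x| / b))%:E)%E.

Definition mutually_independent {R : realType} d (T : measurableType d)
  (P : probability T R) (X : nat -> T -> R) : Prop :=
  forall (J : seq nat) (A : nat -> set R), uniq J ->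
    (forall j, measurable (A j)) ->
    P (\bigcap_(j in [set j | j \in J]) (X j @^-1` A j)) =
    (\prod_(j <- J) P (X j @^-1` A j))%E.

(* Noise convention: Z 0 is the noise added to the threshold T,
   Z 1 is the noise Lap(6/eps) in the output, and Z (k+2) is the noise
   added to Q at the k-th round tau = 2^k. *)
Definition thrT {R : realType} (eps beta : R) : R := - (8 / eps) * ln (4 / beta).

Definition Qtilde {R : realType} (V : finType) (adj : rel V) (z : nat -> R) (k : nat) : R :=
  Q_LP adj (2 ^+ k) + z k.+2.

Definition stops_at {R : realType} (V : finType) (adj : rel V) (eps beta : R)
  (z : nat -> R) (k : nat) : Prop :=
  Qtilde adj z k > thrT eps beta + z 0%N /\
  forall j, (j < k)%N -> ~ (Qtilde adj z j > thrT eps beta + z 0%N).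

Definition tau_star {R : realType} (V : finType) (adj : rel V) (eps beta delta : R)
  (z : nat -> R) (k : nat) : R :=
  3 * 2 ^+ k + 3 * `|Q_LP adj (2 ^+ k)| + z 1%N
  + 6 / eps * ln (Num.max (1 / delta) (2 / beta)) + 1.

Definition log2 {R : realType} (x : R) : R := ln x / ln 2.

Definition bound_tau {R : realType} (D eps beta delta : R) : R :=
  6 * D + 24 / eps * ln (log2 (4 * D)) + 48 / eps * ln (4 / beta)
  + 12 / eps * ln (Num.max (1 / delta) (2 / beta)) + 1.

Definition bound_N {R : realType} (D eps beta : R) : R :=
  24 / eps * ln (log2 (4 * D)) + 48 / eps * ln (4 / beta).

From HB Require Import structures.
From mathcomp Require Import all_boot all_order all_algebra.
From mathcomp Require Import all_classical all_reals all_analysis.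
From mathcomp Require Import ring lra zify.
Set Implicit Arguments. Unset Strict Implicit. Unset Printing Implicit Defensive.
Import Order.TTheory GRing.Theory Num.Theory.
Import numFieldNormedType.Exports.
Local Open Scope classical_set_scope.
Local Open Scope ring_scope.

(* Write q(tau) = - Q_LP(G, tau) >= 0. If x is a feasible point of value close
   to q(tau), a node v with x_v < 1/2 has y-load at least deg(v)/2 - sum x, so
   every node of degree above 2 (tau + q(tau)) has x_v >= 1/2 and hence
   N_t <= 2 q(tau) for t > 2 (tau + q(tau)); moreover q(tau) = 0 once
   tau >= deg G.  Unless the output noise is very negative, tau* is at least
   3 tau + 3 q(tau) + 1, which gives N_{tau*} <= tau*.
   Outside an event of probability beta (a union bound over the threshold
   noise, the noises of rounds 0 .. ceil(log deg G) and the output noise) the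
   test passes at the latest at round ceil(log deg G), where 2^k < 2 deg G, and
   passing forces q(2^k) = O((ln log deg G + ln (1/beta)) / eps); this gives
   both bounds.  For the delta-statement, the rounds after ceil(log deg G)
   pass independently with a fixed positive probability, so the algorithm
   stops except with probability delta/4. *)

Section laplace_density.
Context {R : realType}.

Lemma continuous_laplace_pdf (b : R) :
  continuous (fun x : R => (2 * b)^-1 * expR (- `|x| / b)).
Proof.
move=> x.
apply: (@continuousM _ R^o (fun=> (2 * b)^-1) (fun x : R => expR (- `|x| / b))).
  exact: cst_continuous.
apply: continuous_comp; last exact: continuous_expR.
apply: continuousM; last exact: cst_continuous.
exact/(@continuousN _ R^o)/norm_continuous.
Qed.

Lemma laplace_pdf_ge0 (b x : R) : 0 < b -> 0 <= (2 * b)^-1 * expR (- `|x| / b).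
Proof. by move=> b0; rewrite mulr_ge0 ?expR_ge0 // invr_ge0 mulr_ge0 // ltW. Qed.

Lemma integral_laplace_pdf_itvy (b t : R) : 0 < b -> 0 <= t ->
  (\int[@lebesgue_measure R]_(x in `[t, +oo[) ((2 * b)^-1 * expR (- `|x| / b))%:E
   = (2^-1 * expR (- t / b))%:E)%E.
Proof.
move=> b0 t0.
have expE : (fun x : R => expR (- x / b)) = expR \o ( *%R (- b^-1)).
  by apply: funext => x /=; rewrite mulNr mulrC mulNr.
rewrite (@ge0_continuous_FTC2y _ _ (fun x => - (2^-1 * expR (- x / b))) t 0).
- by rewrite sub0e EFinN oppeK.
- by move=> x _; exact: laplace_pdf_ge0.
- exact/continuous_subspaceT/continuous_laplace_pdf.
- rewrite -oppr0; apply: cvgN; rewrite -(mulr0 (2^-1 : R)); apply: cvgMr.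
  rewrite (_ : (fun x => expR (- x / b)) = (fun z => expR (- z)) \o ( *%R b^-1)).
    apply: (@cvg_comp _ _ _ _ _ _ (pinfty_nbhs R)); last exact: cvgr_expR.
    by apply: gt0_cvgMry; rewrite ?invr_gt0.
  by apply: funext => x /=; rewrite mulNr mulrC.
- by move=> x _; exact: ex_derive.
- apply/cvg_at_right_filter; apply: cvgN; apply: cvgMr.
  have cE : continuous (fun x : R => expR (- x / b)).
    move=> x; apply: continuous_comp; last exact: continuous_expR.
    by apply: continuousM; [exact: (@continuousN _ R^o) | exact: cst_continuous].
  exact: cE.
- move=> x; rewrite in_itv/= andbT => tx.
  rewrite derive1E deriveN // deriveMl // -derive1E expE.
  rewrite derive1_comp // derive1Ml // derive1_id mulr1.
  rewrite [expR^`()%classic _]derive1E derive_val.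
  rewrite ger0_norm /=; last exact: le_trans t0 (ltW tx).
  rewrite (_ : - x / b = - b^-1 * x); last by rewrite mulNr mulrC mulNr.
  rewrite invfM; ring.
Qed.

End laplace_density.

Lemma lee_prode_cst {R : realType} (I : eqType) (s : seq I) (f : I -> \bar R) (q : R) :
  0 <= q -> (forall i, i \in s -> (0 <= f i <= q%:E)%E) ->
  (\prod_(i <- s) f i <= (q ^+ size s)%:E)%E.
Proof.
move=> q0; elim: s => [|i s IH] hf; first by rewrite big_nil expr0.
have hs j : j \in s -> (0 <= f j <= q%:E)%E by move=> js; apply: hf; rewrite inE js orbT.
rewrite big_cons exprS EFinM; have /andP[fi0 fiq] := hf i (mem_head _ _).
apply: lee_pmul => //; last exact: IH.
by rewrite big_seq; apply: prode_ge0 => j /hs /andP[].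
Qed.

Lemma expr_le_eventually {R : realType} (q eta : R) : 0 <= q < 1 -> 0 < eta ->
  exists n, q ^+ n <= eta.
Proof.
move=> /andP[q0 q1] eta0.
have qn0 : (GRing.exp q : R ^nat) @ \oo --> 0 by apply: cvg_expr; rewrite ger0_norm.
have [N _ hN] := (cvgr0Pnorm_lt _).1 qn0 _ eta0.
by exists N; have := hN N (leqnn N); rewrite /= ger0_norm ?exprn_ge0 // => /ltW.
Qed.

Section failure_probability.
Context {R : realType} (d : measure_display) (T : measurableType d).
Context (P : probability T R).

(* [S] need not be measurable: it is controlled through a measurable
   exceptional event [B]. *)
Definition failure_prob_le (r : R) (S : set T) :=
  exists B, [/\ measurable B, (P B <= r%:E)%E & ~` B `<=` S].

Lemma failure_prob_le_event r S : failure_prob_le r S ->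
  exists E, measurable E /\ E `<=` S /\ (1 - r%:E <= P E)%E.
Proof.
move=> [B [mB PB BS]]; exists (~` B); split; first exact: measurableC.
by split=> //; rewrite probability_setC //; apply: leeB.
Qed.

Lemma failure_prob_leW r r' S S' : r <= r' -> S `<=` S' ->
  failure_prob_le r S -> failure_prob_le r' S'.
Proof.
move=> rr' SS' [B [mB PB BS]]; exists B; split=> //.
  by apply: le_trans PB _; rewrite lee_fin.
by move=> w /BS /SS'.
Qed.

Lemma failure_prob_leI r1 r2 S1 S2 : failure_prob_le r1 S1 -> failure_prob_le r2 S2 ->
  failure_prob_le (r1 + r2) (S1 `&` S2).
Proof.
move=> [B1 [mB1 PB1 BS1]] [B2 [mB2 PB2 BS2]].
exists (B1 `|` B2); split; first exact: measurableU.
  by rewrite EFinD; apply: le_trans (measureU2 _ mB1 mB2) (leeD PB1 PB2).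
by rewrite setCU => w [/BS1 ? /BS2 ?].
Qed.

Lemma failure_prob_le_bigcap n r (S : nat -> set T) :
  (forall k, failure_prob_le r (S k)) ->
  failure_prob_le (n%:R * r) [set w | forall k, (k < n)%N -> S k w].
Proof.
move=> /choice[B hB]; have mB k : measurable (B k) by case: (hB k).
have PB k : (P (B k) <= r%:E)%E by case: (hB k).
exists (\big[setU/set0]_(k < n) B k); split.
- exact: bigsetU_measurable.
- apply: le_trans (@Boole_inequality _ _ _ P B n (fun k _ => mB k)) _.
  apply: (@le_trans _ _ (\sum_(k < n) r%:E)%E).
    by apply: lee_sum => k _; exact: PB.
  by rewrite sumEFin sumr_const card_ord mulr_natl.
- move=> w nBw k kn; case: (hB k) => _ _; apply=> Bkw.
  by apply: nBw; exact: bigsetU_sup kn _ Bkw.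
Qed.

Lemma laplace_upper_tail (X : T -> R) (b u : R) :
  laplace_law P X b -> 0 < b -> 0 <= u ->
  P (X @^-1` `[b * u, +oo[) = (2^-1 * expR (- u))%:E.
Proof.
move=> hX b0 u0; rewrite hX // integral_laplace_pdf_itvy //; last exact: mulr_ge0 (ltW b0) u0.
by rewrite mulNr mulrAC divff ?mul1r ?gt_eqF.
Qed.

Lemma laplace_lower_tail (X : T -> R) (b u : R) :
  laplace_law P X b -> 0 < b -> 0 <= u ->
  P (X @^-1` `]-oo, - (b * u)]) = (2^-1 * expR (- u))%:E.
Proof.
move=> hX b0 u0; rewrite hX // ge0_integration_by_substitutionNy.
- rewrite -(laplace_upper_tail hX b0 u0) hX //.
  by apply: eq_integral => x _ /=; rewrite normrN.
- exact/continuous_subspaceT/continuous_laplace_pdf.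
- by move=> x _; exact: laplace_pdf_ge0.
Qed.

Lemma failure_prob_le_laplace_lt (X : {RV P >-> R}) (b u : R) :
  laplace_law P X b -> 0 < b -> 0 <= u ->
  failure_prob_le (2^-1 * expR (- u)) [set w | X w < b * u].
Proof.
move=> hX b0 u0; exists (X @^-1` `[b * u, +oo[); split.
- exact: measurable_funPTI.
- by rewrite laplace_upper_tail.
- by move=> w /=; rewrite in_itv /= andbT ltNge => /negP.
Qed.

Lemma failure_prob_le_laplace_gt (X : {RV P >-> R}) (b u : R) :
  laplace_law P X b -> 0 < b -> 0 <= u ->
  failure_prob_le (2^-1 * expR (- u)) [set w | - (b * u) < X w].
Proof.
move=> hX b0 u0; exists (X @^-1` `]-oo, - (b * u)]); split.
- exact: measurable_funPTI.
- by rewrite laplace_lower_tail.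
- by move=> w /=; rewrite in_itv /= ltNge => /negP.
Qed.

Lemma probability_itvNy_le_compl (X : {RV P >-> R}) (s c : R) : s < c ->
  (P (X @^-1` `]-oo, s]) <= 1 - P (X @^-1` `[c, +oo[))%E.
Proof.
move=> sc; rewrite -probability_setC; last exact: measurable_funPTI.
apply: le_measure; rewrite ?inE.
- exact: measurable_funPTI.
- exact/measurableC/measurable_funPTI.
by move=> w /=; rewrite !in_itv /= andbT => ws /(lt_le_trans (le_lt_trans ws sc)); rewrite ltxx.
Qed.

Lemma failure_prob_le_independent_gt (Z : nat -> {RV P >-> R}) (J : seq nat) (s c p : R) :
  mutually_independent P (fun j => Z j : T -> R) -> uniq J -> s < c -> p <= 1 ->
  (forall j, j \in J -> P (Z j @^-1` `[c, +oo[) = p%:E) ->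
  failure_prob_le ((1 - p) ^+ size J) [set w | exists2 j, j \in J & s < Z j w].
Proof.
move=> hind uJ sc p1 hp.
exists (\bigcap_(j in [set j | j \in J]) Z j @^-1` `]-oo, s]); split.
- by apply: bigcap_measurableType => j _; exact: measurable_funPTI.
- rewrite (hind J (fun=> `]-oo, s]%classic) uJ (fun=> measurable_itv _)).
  apply: lee_prode_cst => [|j jJ]; first by rewrite subr_ge0.
  rewrite measure_ge0 /= EFinB -(hp j jJ).
  exact: probability_itvNy_le_compl.
- move=> w /= nw; apply: contrapT => nex; apply: nw => j /= jJ.
  by rewrite in_itv /= leNgt; apply/negP => sj; apply: nex; exists j.
Qed.

End failure_probability.

Section lp_del_n.
Context {R : realType} (V : finType) (adj : rel V).

Let lp_values (tau : R) :=
  [set r : R | exists x y, lp_feasible adj tau x y /\ r = - \sum_(v : V) x v].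

Lemma sum_adj_cst (v : V) (c : R) : \sum_(u | adj v u) c = c * (degv adj v)%:R.
Proof. by rewrite mulr_natr -sumr_const; apply: eq_bigl => u; apply/idP/idP; rewrite in_setE. Qed.

Lemma lp_values_ub (tau : R) : ubound (lp_values tau) 0.
Proof.
move=> _ [x [y [[_ [_ [_ [hx _]]]] ->]]].
by rewrite oppr_le0; apply: sumr_ge0 => v _; case/andP: (hx v).
Qed.

Lemma lp_values_has_sup (tau : R) : 0 <= tau -> has_sup (lp_values tau).
Proof.
move=> tau0; split; last by exists 0; exact: lp_values_ub.
exists (- \sum_(v : V) 1), (fun=> 1), (fun _ _ => 0); split=> //.
split=> //; split; first by move=> u v _; rewrite subrr add0r lerN10.
split; first by move=> v; rewrite big1.
by split=> [v|u v _]; rewrite ler01 lexx.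
Qed.

Lemma Q_LP_le0 (tau : R) : 0 <= tau -> Q_LP adj tau <= 0.
Proof. by move=> /lp_values_has_sup[ne _]; apply: ge_sup => //; exact: lp_values_ub. Qed.

Lemma Q_LP_ge0 (tau : R) : (maxdeg adj)%:R <= tau -> 0 <= Q_LP adj tau.
Proof.
move=> Dtau; have tau0 : 0 <= tau by apply: le_trans Dtau.
apply: sup_upper_bound; first exact: lp_values_has_sup.
exists (fun=> 0), (fun _ _ => 1); split; last by rewrite big1 ?oppr0.
split=> //; split; first by move=> u v _; rewrite !subr0.
split.
  move=> v; rewrite sum_adj_cst mul1r; apply: le_trans Dtau.
  by rewrite ler_nat /maxdeg (leq_bigmax v).
by split=> [v|u v _]; rewrite lexx ler01.
Qed.

Lemma feasible_deg_le (tau : R) x y v : lp_feasible adj tau x y -> x v < 2^-1 ->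
  (degv adj v)%:R <= 2 * (tau + \sum_(u : V) x u).
Proof.
move=> [_ [hy [hsum [hx _]]]] xv.
have x0 u : 0 <= x u by case/andP: (hx u).
have edges : \sum_(u | adj v u) (1 - x v - x u) <= tau.
  by apply: le_trans (hsum v); apply: ler_sum => u /hy.
have nbrs : \sum_(u | adj v u) x u <= \sum_(u : V) x u.
  by rewrite [leRHS](bigID (adj v)) /= lerDl; apply: sumr_ge0.
rewrite sumrB sum_adj_cst in edges.
have : 2^-1 * (degv adj v)%:R <= (1 - x v) * (degv adj v)%:R by apply: ler_wpM2r => //; lra.
lra.
Qed.

Lemma Nt_le_feasible (tau t : R) x y : lp_feasible adj tau x y ->
  2 * (tau + \sum_(v : V) x v) < t -> (Nt adj t)%:R <= 2 * \sum_(v : V) x v.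
Proof.
move=> fxy ht; have x0 v : 0 <= x v by case: fxy => _ [_ [_ [/(_ v)/andP[]]]].
have heavy v : v \in [set v | t <= (degv adj v)%:R] -> 2^-1 <= x v.
  rewrite in_setE /= => tv; rewrite leNgt; apply/negP => /(feasible_deg_le fxy); lra.
suff : (Nt adj t)%:R * 2^-1 <= \sum_(v : V) x v by lra.
rewrite mulrC mulr_natr -sumr_const; apply: le_trans (ler_sum _ heavy) _.
by rewrite [leRHS](bigID (mem [set v | t <= (degv adj v)%:R])) /= lerDl; apply: sumr_ge0.
Qed.

Lemma Nt_le_Q_LP (tau t : R) : 0 <= tau -> 2 * (tau - Q_LP adj tau) < t ->
  (Nt adj t)%:R <= 2 * (- Q_LP adj tau).
Proof.
move=> tau0 ht; apply/ler_addgt0Pr => e e0.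
set e' := Num.min (e / 2) ((t - 2 * (tau - Q_LP adj tau)) / 2).
have e'0 : 0 < e' by rewrite lt_min !divr_gt0 // subr_gt0.
have e'e : e' <= e / 2 by rewrite ge_min lexx.
have e't : e' <= (t - 2 * (tau - Q_LP adj tau)) / 2 by rewrite ge_min lexx orbT.
have [_ [x [y [fxy ->]]] hr] := sup_adherent e'0 (lp_values_has_sup tau0).
have := Nt_le_feasible (t := t) fxy; rewrite -/(Q_LP adj tau) in hr; lra.
Qed.

End lp_del_n.

Lemma up_log2_bounds n : (0 < n)%N -> (n <= 2 ^ up_log 2 n < n.*2)%N.
Proof.
move=> n0; case: (leqP n 1) => [n_le1|n_gt1].
  by have -> : n = 1%N by lia.
have /andP[lo hi] := up_log_bounds (isT : (1 < 2)%N) n_gt1.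
rewrite hi /=; move: lo; have := up_log_gt0 2 n; rewrite n_gt1 /=.
by case: (up_log 2 n) => // k _; rewrite expnS /= -muln2; lia.
Qed.

Lemma up_log2S_le_log2 {R : realType} n : (0 < n)%N ->
  ((up_log 2 n).+1)%:R <= log2 (4 * n%:R : R).
Proof.
move=> /up_log2_bounds/andP[_ hi]; have ln2 : 0 < ln (2 : R) by rewrite ln_gt0 ?ltr1n.
rewrite /log2 ler_pdivlMr // [leLHS]mulr_natl -lnXn ?ltr0n // ler_ln ?posrE ?exprn_gt0 //.
  by rewrite -natrX -natrM ler_nat expnS; lia.
by rewrite mulr_gt0 ?ltr0n //; case: n hi.
Qed.

Section sparse_vector.
Context {R : realType} (V : finType) (adj : rel V) (eps beta delta : R).

Definition passes (z : nat -> R) (k : nat) : Prop :=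
  thrT eps beta + z 0%N < Qtilde adj z k.

Lemma stops_at_first_pass (z : nat -> R) n : passes z n ->
  exists k, stops_at adj eps beta z k /\ (k <= n)%N.
Proof.
move=> pn; have ex : exists k, `[< passes z k >] by exists n; exact/asboolP.
case: (ex_minnP ex) => k /asboolP pk kmin.
exists k; split; last exact/kmin/asboolP.
by split=> // j jk /asboolP /kmin; rewrite leqNgt jk.
Qed.

Lemma passesE (z : nat -> R) k : passes z k <->
  - Q_LP adj (2 ^+ k : R) < z k.+2 - z 0%N + 8 / eps * ln (4 / beta).
Proof. by rewrite /passes /Qtilde /thrT; split=> ?; lra. Qed.

Let ML := 6 / eps * ln (Num.max (1 / delta) (2 / beta)).

Lemma tau_star_ge (z : nat -> R) k : - ML <= z 1%N ->
  3 * 2 ^+ k + 3 * - Q_LP adj (2 ^+ k) + 1 <= tau_star adj eps beta delta z k.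
Proof. by move=> z1; rewrite /tau_star -/ML ler0_norm ?Q_LP_le0 ?exprn_ge0 //; lra. Qed.

Lemma Nt_tau_star_le (z : nat -> R) k : - ML <= z 1%N ->
  (Nt adj (tau_star adj eps beta delta z k))%:R <= 2 * - Q_LP adj (2 ^+ k : R).
Proof.
move=> z1; apply: Nt_le_Q_LP; first exact: exprn_ge0.
have := tau_star_ge k z1; have := Q_LP_le0 adj (exprn_ge0 k (ler0n R 2)).
have : 1 <= 2 ^+ k :> R by apply: exprn_ege1; rewrite ler1n.
lra.
Qed.

Lemma tau_star_Nt_le (z : nat -> R) k : - ML <= z 1%N ->
  let ts := tau_star adj eps beta delta z k in ts + (Nt adj ts)%:R <= 2 * ts.
Proof.
move=> z1 /=; have := tau_star_ge k z1; have := Nt_tau_star_le k z1.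
have := Q_LP_le0 adj (exprn_ge0 k (ler0n R 2)); have : 0 <= 2 ^+ k :> R by exact: exprn_ge0.
lra.
Qed.

End sparse_vector.

Lemma ln_div_ge0 {R : realType} (a x : R) : 0 < x <= 1 -> 1 <= a -> 0 <= ln (a / x).
Proof. by move=> /andP[x0 x1] a1; rewrite ln_ge0 // ler_pdivlMr // mul1r (le_trans x1). Qed.

Lemma half_expR_Nln {R : realType} (a : R) : 0 < a -> 2^-1 * expR (- ln a) = (2 * a)^-1.
Proof. by move=> a0; rewrite expRN lnK ?posrE // invfM. Qed.

Lemma ln_le_maxl {R : realType} (x y : R) : 0 < x -> 0 < y -> ln x <= ln (Num.max x y).
Proof. by move=> x0 y0; rewrite ler_ln ?posrE ?le_max ?lexx // lt_max x0. Qed.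

Lemma ln_le_maxr {R : realType} (x y : R) : 0 < x -> 0 < y -> ln y <= ln (Num.max x y).
Proof. by move=> x0 y0; rewrite ler_ln ?posrE ?le_max ?lexx ?orbT // lt_max y0 orbT. Qed.

Section noisy_rounds.
Context {R : realType} (d : measure_display) (T : measurableType d).
Context (P : probability T R) (Z : nat -> {RV P >-> R}).
Context (V : finType) (adj : rel V) (eps beta delta : R).
Hypotheses (eps_gt0 : 0 < eps) (beta01 : 0 < beta < 1) (delta01 : 0 < delta < 1).
Hypothesis has_edge : exists u v, adj u v.
Hypotheses (Z0_law : laplace_law P (Z 0%N) (4 / eps))
  (Z1_law : laplace_law P (Z 1%N) (6 / eps))
  (Zround_law : forall k, laplace_law P (Z k.+2) (4 / eps)).

Let D : R := (maxdeg adj)%:R.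
Let k0 := up_log 2 (maxdeg adj).
Let A := 4 / eps * ln (4 / beta).
Let C := 4 / eps * (ln (log2 (4 * D)) + ln (4 / beta)).
Let M := 6 / eps * ln (2 / beta).

Lemma maxdeg_gt0 : (0 < maxdeg adj)%N.
Proof.
have [u [v uv]] := has_edge; apply: leq_trans (leq_bigmax u).
by apply/card_gt0P; exists v; rewrite in_setE.
Qed.

Lemma Q_LP_ge0_up_log k : (k0 <= k)%N -> 0 <= Q_LP adj (2 ^+ k : R).
Proof.
move=> k0k; apply: Q_LP_ge0; apply: (@le_trans _ _ (2 ^+ k0)); last first.
  by rewrite ler_eXn2l ?ltr1n.
by rewrite -natrX ler_nat; have /andP[] := up_log2_bounds maxdeg_gt0.
Qed.

Lemma passes_up_log (z : nat -> R) : z 0%N < A -> - A < z k0.+2 -> passes adj eps beta z k0.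
Proof.
move=> z0 zk0; apply/passesE; have := Q_LP_ge0_up_log (leqnn k0).
rewrite /A in z0 zk0; lra.
Qed.

Lemma stops_within_bounds (z : nat -> R) :
  z 0%N < A -> - C < z 0%N -> - A < z k0.+2 -> (forall k, (k < k0.+1)%N -> z k.+2 < C) ->
  - M < z 1%N -> z 1%N < M ->
  exists k, stops_at adj eps beta z k /\
    let ts := tau_star adj eps beta delta z k in
    ts <= bound_tau D eps beta delta /\ (Nt adj ts)%:R <= bound_N D eps beta.
Proof.
move=> z0A z0C zk0 zkC z1M z1M'.
have [k [sk kk0]] := stops_at_first_pass (passes_up_log z0A zk0).
exists k; split=> // ts; have [b0 _] := andP beta01; have [d0 _] := andP delta01.
set ML := 6 / eps * ln (Num.max (1 / delta) (2 / beta)).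
have M_ML : M <= ML.
  rewrite /M /ML ler_pM2l ?divr_gt0 //; exact: ln_le_maxr (divr_gt0 _ d0) (divr_gt0 _ b0).
have pass : - Q_LP adj (2 ^+ k : R) < 2 * A + 2 * C.
  have := (passesE _ _ _ _ _).1 sk.1; have := zkC k kk0; rewrite /A; lra.
have pow : 2 ^+ k < 2 * D :> R.
  have /andP[_ hi] := up_log2_bounds maxdeg_gt0.
  apply: (@le_lt_trans _ _ (2 ^+ k0)); first by rewrite ler_eXn2l ?ltr1n.
  by rewrite -natrX /D -natrM ltr_nat mul2n.
have hz : - ML <= z 1%N by lra.
have tsE : ts = 3 * 2 ^+ k + 3 * - Q_LP adj (2 ^+ k) + z 1%N + ML + 1.
  by rewrite /ts /tau_star ler0_norm // Q_LP_le0 // exprn_ge0.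
have bE : bound_tau D eps beta delta = 6 * D + 6 * C + 6 * A + 2 * ML + 1.
  by rewrite /bound_tau /C /A /ML; ring.
have NE : bound_N D eps beta = 6 * C + 6 * A by rewrite /bound_N /C /A; ring.
have := Nt_tau_star_le adj k hz; have := Q_LP_le0 adj (exprn_ge0 k (ler0n R 2)).
rewrite -/ts tsE bE NE; lra.
Qed.

Lemma stops_with_Nt_le (z : nat -> R) k : (k0 <= k)%N ->
  - (6 / eps * ln (1 / delta)) < z 1%N -> z 0%N < 4 / eps * ln (2 / delta) ->
  thrT eps beta + 4 / eps * ln (2 / delta) < z k.+2 ->
  exists k', stops_at adj eps beta z k' /\
    let ts := tau_star adj eps beta delta z k' in ts + (Nt adj ts)%:R <= 2 * ts.
Proof.
move=> k0k z1 z0 zk; have [b0 _] := andP beta01; have [d0 _] := andP delta01.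
have pk : passes adj eps beta z k.
  by have := Q_LP_ge0_up_log k0k; rewrite /passes /Qtilde; lra.
have [k' [sk' _]] := stops_at_first_pass pk.
exists k'; split=> //; apply: tau_star_Nt_le.
have hmax : ln (1 / delta) <= ln (Num.max (1 / delta) (2 / beta)).
  exact: ln_le_maxl (divr_gt0 _ d0) (divr_gt0 _ b0).
have b6 : 0 <= 6 / eps by rewrite divr_ge0 // ltW.
have := ler_wpM2l b6 hmax; lra.
Qed.

Lemma tau_star_bounds_whp :
  failure_prob_le P beta [set w | exists k, stops_at adj eps beta (fun j => Z j w) k /\
    let ts := tau_star adj eps beta delta (fun j => Z j w) k in
    ts <= bound_tau D eps beta delta /\ (Nt adj ts)%:R <= bound_N D eps beta].
Proof.
have [b0 b1] := andP beta01; have b4 : 0 < 4 / eps by rewrite divr_gt0.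
have b6 : 0 < 6 / eps by rewrite divr_gt0.
have b01 : 0 < beta <= 1 by rewrite b0 ltW.
have L1 : 1 <= log2 (4 * D).
  by apply: le_trans (up_log2S_le_log2 maxdeg_gt0); rewrite ler1n.
have s0 : 0 <= ln (4 / beta) by apply: (ln_div_ge0 b01); lra.
have m0 : 0 <= ln (2 / beta) by apply: (ln_div_ge0 b01); lra.
have c0 := addr_ge0 (ln_ge0 L1) s0.
have := failure_prob_leI (failure_prob_le_laplace_lt Z0_law b4 s0)
  (failure_prob_leI (failure_prob_le_laplace_gt Z0_law b4 c0)
  (failure_prob_leI (failure_prob_le_laplace_gt (Zround_law k0) b4 s0)
  (failure_prob_leI (failure_prob_le_bigcap k0.+1
     (fun k => failure_prob_le_laplace_lt (Zround_law k) b4 c0))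
  (failure_prob_leI (failure_prob_le_laplace_gt Z1_law b6 m0)
     (failure_prob_le_laplace_lt Z1_law b6 m0))))).
apply: failure_prob_leW => [|w [z0A [z0C [zk0 [zkC [z1M z1M']]]]]]; last first.
  exact: stops_within_bounds.
have kL : (k0.+1)%:R <= log2 (4 * D) := up_log2S_le_log2 maxdeg_gt0.
set L := log2 (4 * D) in L1 kL *.
have L0 : 0 < L by lra.
have t4 : (2 * (4 / beta))^-1 = beta / 8 by field; rewrite gt_eqF.
have t2 : (2 * (2 / beta))^-1 = beta / 4 by field; rewrite gt_eqF.
have tC : (2 * (L * (4 / beta)))^-1 = L^-1 * (beta / 8) by field; rewrite !gt_eqF.
have iL1 : L^-1 * (beta / 8) <= beta / 8 by rewrite ler_pdivrMl // ler_peMl //; lra.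
have kiL : k0.+1%:R * (L^-1 * (beta / 8)) <= beta / 8.
  by rewrite mulrA ger_pMl ?divr_gt0 // ler_pdivrMr // mul1r.
have b4' : 0 < 4 / beta by rewrite divr_gt0.
have b2' : 0 < 2 / beta by rewrite divr_gt0.
have bL : 0 < L * (4 / beta) by rewrite mulr_gt0.
rewrite -lnM ?posrE // !half_expR_Nln // t4 t2 tC; lra.
Qed.

Lemma tau_star_Nt_whp : mutually_independent P (fun j => Z j : T -> R) ->
  failure_prob_le P delta [set w | exists k, stops_at adj eps beta (fun j => Z j w) k /\
    let ts := tau_star adj eps beta delta (fun j => Z j w) k in ts + (Nt adj ts)%:R <= 2 * ts].
Proof.
move=> hind; have [d0 d1] := andP delta01; have b4 : 0 < 4 / eps by rewrite divr_gt0.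
have b6 : 0 < 6 / eps by rewrite divr_gt0.
have d01 : 0 < delta <= 1 by rewrite d0 ltW.
have u0 : 0 <= ln (1 / delta) by apply: (ln_div_ge0 d01).
have m0 : 0 <= ln (2 / delta) by apply: (ln_div_ge0 d01); lra.
pose s := thrT eps beta + 4 / eps * ln (2 / delta).
(* Round [k >= k0] passes once its noise exceeds [s]; the noise exceeds [c > s]
   with a fixed probability [p > 0], independently across rounds. *)
pose c := `|s| + 1.
pose p := 2^-1 * expR (- (c / (4 / eps))).
have sc : s < c by rewrite /c ltr_pwDr ?ler_norm.
have p0 : 0 < p by rewrite mulr_gt0 ?expR_gt0.
have c0 : 0 <= c / (4 / eps) by rewrite divr_ge0 ?(ltW b4) // /c addr_ge0.
have p1 : p < 1.
  have : expR (- (c / (4 / eps))) <= 1 by rewrite expR_le1 oppr_le0.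
  rewrite /p; lra.
have [n pn] : exists n, (1 - p) ^+ n <= delta / 4.
  by apply: expr_le_eventually; [apply/andP; split; lra | rewrite divr_gt0].
have hp j : j \in iota k0.+2 n -> P (Z j @^-1` `[c, +oo[) = p%:E.
  rewrite mem_iota; case: j => [|[|k]] // _.
  have cE : 4 / eps * (c / (4 / eps)) = c by rewrite mulrC divfK ?gt_eqF.
  by rewrite -[in LHS]cE (laplace_upper_tail (Zround_law k) b4 c0).
have := failure_prob_leI (failure_prob_le_laplace_gt Z1_law b6 u0)
  (failure_prob_leI (failure_prob_le_laplace_lt Z0_law b4 m0)
     (failure_prob_le_independent_gt hind (iota_uniq k0.+2 n) sc (ltW p1) hp)).
apply: failure_prob_leW => [|w [/= z1 [/= z0 [j jJ sj]]]].
  have t1 : (2 * (1 / delta))^-1 = delta / 2 by field; rewrite gt_eqF.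
  have t2 : (2 * (2 / delta))^-1 = delta / 4 by field; rewrite gt_eqF.
  rewrite size_iota !half_expR_Nln ?divr_gt0 // t1 t2; lra.
move: jJ; rewrite mem_iota => /andP[+ _]; case: j sj => [|[|k]] // sk k0k.
exact: stops_with_Nt_le k0k z1 z0 sk.
Qed.

End noisy_rounds.

Theorem mainTheorem8 (R : realType) (d : measure_display) (T : measurableType d)
  (P : probability T R) (Z : nat -> {RV P >-> R})
  (V : finType) (adj : rel V) (eps beta delta : R) :
  0 < eps -> 0 < beta < 1 -> 0 < delta < 1 ->
  simple_graph adj -> (exists u v, adj u v) ->
  mutually_independent P (fun j => (Z j : T -> R)) ->
  laplace_law P (Z 0%N) (4 / eps) ->
  laplace_law P (Z 1%N) (6 / eps) ->
  (forall k, laplace_law P (Z k.+2) (4 / eps)) ->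
  let D : R := (maxdeg adj)%:R in
  (exists E : set T, measurable E /\
     E `<=` [set w | exists k, stops_at adj eps beta (fun j => Z j w) k /\
        let ts := tau_star adj eps beta delta (fun j => Z j w) k in
        ts <= bound_tau D eps beta delta /\
        (Nt adj ts)%:R <= bound_N D eps beta] /\
     (1 - beta%:E <= P E)%E) /\
  (exists E : set T, measurable E /\
     E `<=` [set w | exists k, stops_at adj eps beta (fun j => Z j w) k /\
        let ts := tau_star adj eps beta delta (fun j => Z j w) k in
        ts + (Nt adj ts)%:R <= 2 * ts] /\
     (1 - delta%:E <= P E)%E).
Proof.
move=> eps_gt0 beta01 delta01 _ has_edge hind Z0_law Z1_law Zround_law D.
split; apply: failure_prob_le_event.
- exact: tau_star_bounds_whp.
- exact: tau_star_Nt_whp.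
Qed.
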